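(* The compactness theorem holds for quantified propositional team logic $\mathrm{QPTL}$.
   Context: $\mathrm{QPTL}$ is $\mathcal{Q}(\mathrm{QBF})$: the closure of quantified Boolean formulas under strong negation $\sim$, material implication (written $\Rightarrow$; true iff the team falsifies the antecedent or satisfies the consequent), linear implication $\multimap$ (lax splitting of teams) and the team quantifiers $\forall x$ (duplicating team, $x$ takes both values $0,1$) and $!x$ (all supplementing functions into $\mathfrak{P}(\{0,1\})\setminus\{\emptyset\}$), interpreted on teams of propositional assignments. It follows from the soundness and completeness of the system $\mathsf{H}^0\mathsf{XLSQ}$ for $\mathrm{QPTL}$, where $\mathsf{X}$ is the expansion axiom $\forall x\alpha\leftrightarrow(\alpha[x/\top]\wedge\alpha[x/\bot])$. *)

From Stdlib Require Import List Arith Bool.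
Import ListNotations.

Definition assignment := nat -> bool.
Definition team := assignment -> Prop.

Definition upd (s : assignment) (x : nat) (a : bool) : assignment :=
  fun y => if Nat.eqb y x then a else s y.

Inductive qbf : Type :=
| QVar : nat -> qbf
| QTop : qbf
| QBot : qbf
| QNeg : qbf -> qbf
| QAnd : qbf -> qbf -> qbf
| QOr : qbf -> qbf -> qbf
| QForall : nat -> qbf -> qbf
| QExists : nat -> qbf -> qbf.

Fixpoint qbf_eval (a : qbf) (s : assignment) : bool :=
  match a with
  | QVar x => s x
  | QTop => true
  | QBot => false
  | QNeg b => negb (qbf_eval b s)
  | QAnd b c => qbf_eval b s && qbf_eval c s
  | QOr b c => qbf_eval b s || qbf_eval c s
  | QForall x b => qbf_eval b (upd s x false) && qbf_eval b (upd s x true)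
  | QExists x b => qbf_eval b (upd s x false) || qbf_eval b (upd s x true)
  end.

Inductive qptl : Type :=
| TAtom : qbf -> qptl
| TSNeg : qptl -> qptl
| TImp : qptl -> qptl -> qptl
| TLin : qptl -> qptl -> qptl
| TForall : nat -> qptl -> qptl
| TShriek : nat -> qptl -> qptl.

Definition dup_team (X : team) (x : nat) : team :=
  fun t => exists s a, X s /\ forall y, t y = upd s x a y.

Definition supp_team (X : team) (F : assignment -> bool -> Prop) (x : nat) : team :=
  fun t => exists s a, X s /\ F s a /\ forall y, t y = upd s x a y.

Fixpoint tsat (phi : qptl) (X : team) : Prop :=
  match phi with
  | TAtom a => forall s, X s -> qbf_eval a s = true
  | TSNeg p => ~ tsat p X
  | TImp p q => ~ tsat p X \/ tsat q X
  | TLin p q => forall Y Z : team,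
      (forall s, X s <-> (Y s \/ Z s)) -> tsat p Y -> tsat q Z
  | TForall x p => tsat p (dup_team X x)
  | TShriek x p => forall F : assignment -> bool -> Prop,
      (forall s, X s -> exists a, F s a) -> tsat p (supp_team X F x)
  end.

Definition entails (Gamma : qptl -> Prop) (phi : qptl) : Prop :=
  forall X : team, (forall psi, Gamma psi -> tsat psi X) -> tsat phi X.

(** The truth of a formula in a team depends only on the projection of the team
    onto the finitely many variables the formula mentions, and there are only
    finitely many such projections onto the variables below [n].  If no finite
    part of [Gamma] entails [phi], then for every [n] some team satisfies the
    formulas of [Gamma] over the variables below [n] and falsifies [phi]; a König
    argument over the finitely branching tree of projections then yields a
    single team satisfying all of [Gamma] and falsifying [phi]. *)

From Stdlib Require Import List Arith Lia Classical ClassicalEpsilon.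
Import ListNotations.

(** Bounds on the variables a formula depends on; bound variables need not be
    counted, since quantifying over [x] overwrites [x] in both assignments. *)
Fixpoint qbf_var_bound (a : qbf) : nat :=
  match a with
  | QVar x => S x
  | QTop | QBot => 0
  | QNeg b | QForall _ b | QExists _ b => qbf_var_bound b
  | QAnd b c | QOr b c => max (qbf_var_bound b) (qbf_var_bound c)
  end.

Fixpoint var_bound (p : qptl) : nat :=
  match p with
  | TAtom a => qbf_var_bound a
  | TSNeg q | TForall _ q | TShriek _ q => var_bound q
  | TImp q r | TLin q r => max (var_bound q) (var_bound r)
  end.

Definition agree_below (n : nat) (s t : assignment) : Prop :=
  forall y, y < n -> s y = t y.

Definition equiv_below (n : nat) (X Y : team) : Prop :=
  (forall s, X s -> exists t, Y t /\ agree_below n s t) /\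
  (forall t, Y t -> exists s, X s /\ agree_below n s t).

Lemma agree_below_sym n s t : agree_below n s t -> agree_below n t s.
Proof. intros H y Hy; symmetry; auto. Qed.

Lemma agree_below_trans n s t u :
  agree_below n s t -> agree_below n t u -> agree_below n s u.
Proof. intros H H' y Hy; rewrite H; auto. Qed.

Lemma agree_below_mono k n s t : k <= n -> agree_below n s t -> agree_below k s t.
Proof. intros Hk H y Hy; apply H; lia. Qed.

Lemma agree_below_upd n s t x a :
  agree_below n s t -> agree_below n (upd s x a) (upd t x a).
Proof. intros H y Hy; unfold upd; destruct (Nat.eqb y x); auto. Qed.

Lemma equiv_below_refl n X : equiv_below n X X.
Proof. split; intros s Hs; exists s; split; auto; intros y _; auto. Qed.

Lemma equiv_below_sym n X Y : equiv_below n X Y -> equiv_below n Y X.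
Proof.
  intros [H1 H2]; split.
  - intros t Ht; destruct (H2 t Ht) as [s [Hs Ha]].
    exists s; split; auto using agree_below_sym.
  - intros s Hs; destruct (H1 s Hs) as [t [Ht Ha]].
    exists t; split; auto using agree_below_sym.
Qed.

Lemma equiv_below_trans n X Y Z :
  equiv_below n X Y -> equiv_below n Y Z -> equiv_below n X Z.
Proof.
  intros [H1 H2] [H3 H4]; split.
  - intros s Hs; destruct (H1 s Hs) as [t [Ht Ha]]; destruct (H3 t Ht) as [u [Hu Hb]].
    exists u; split; eauto using agree_below_trans.
  - intros u Hu; destruct (H4 u Hu) as [t [Ht Ha]]; destruct (H2 t Ht) as [s [Hs Hb]].
    exists s; split; eauto using agree_below_trans.
Qed.

Lemma equiv_below_mono k n X Y : k <= n -> equiv_below n X Y -> equiv_below k X Y.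
Proof.
  intros Hk [H1 H2]; split.
  - intros s Hs; destruct (H1 s Hs) as [t [Ht Ha]]; eauto using agree_below_mono.
  - intros t Ht; destruct (H2 t Ht) as [s [Hs Ha]]; eauto using agree_below_mono.
Qed.

Lemma equiv_below_restrict n X Y Y' :
  equiv_below n X Y -> (forall t, Y' t -> Y t) ->
  equiv_below n (fun s => X s /\ exists t, Y' t /\ agree_below n s t) Y'.
Proof.
  intros [_ H2] HY'; split.
  - intros s [_ Hs]; exact Hs.
  - intros t Ht; destruct (H2 t (HY' t Ht)) as [s [Hs Ha]].
    exists s; split; [split; [|exists t]|]; auto.
Qed.

Lemma equiv_below_split n X Y Y1 Y2 :
  equiv_below n X Y -> (forall t, Y t <-> Y1 t \/ Y2 t) ->
  exists X1 X2, (forall s, X s <-> X1 s \/ X2 s) /\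
    equiv_below n X1 Y1 /\ equiv_below n X2 Y2.
Proof.
  intros HXY HY.
  exists (fun s => X s /\ exists t, Y1 t /\ agree_below n s t),
         (fun s => X s /\ exists t, Y2 t /\ agree_below n s t).
  split; [|split; apply equiv_below_restrict with Y; auto; intros t Ht; apply HY; auto].
  intro s; split; [|intros [[Hs _]|[Hs _]]; auto].
  intro Hs; destruct (proj1 HXY s Hs) as [t [Ht Ha]].
  destruct (proj1 (HY t) Ht); [left|right]; split; eauto.
Qed.

Lemma equiv_below_dup n X Y x :
  equiv_below n X Y -> equiv_below n (dup_team X x) (dup_team Y x).
Proof.
  intros [H1 H2]; split.
  - intros u [s [a [Hs Hu]]]; destruct (H1 s Hs) as [t [Ht Ha]].
    exists (upd t x a); split; [exists t, a; auto|].
    intros y Hy; rewrite Hu; apply (agree_below_upd n _ _ x a Ha); auto.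
  - intros u [t [a [Ht Hu]]]; destruct (H2 t Ht) as [s [Hs Ha]].
    exists (upd s x a); split; [exists s, a; auto|].
    intros y Hy; rewrite Hu; apply (agree_below_upd n _ _ x a Ha); auto.
Qed.

Lemma equiv_below_supp n X Y G x :
  equiv_below n X Y -> (forall t, Y t -> exists a, G t a) ->
  exists F, (forall s, X s -> exists a, F s a) /\
    equiv_below n (supp_team X F x) (supp_team Y G x).
Proof.
  intros [H1 H2] HG.
  exists (fun s a => exists t, Y t /\ agree_below n s t /\ G t a); split; [|split].
  - intros s Hs; destruct (H1 s Hs) as [t [Ht Ha]]; destruct (HG t Ht) as [a Hta].
    exists a, t; auto.
  - intros u [s [a [_ [[t [Ht [Ha Hta]]] Hu]]]].
    exists (upd t x a); split; [exists t, a; auto|].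
    intros y Hy; rewrite Hu; apply (agree_below_upd n _ _ x a Ha); auto.
  - intros u [t [a [Ht [Hta Hu]]]]; destruct (H2 t Ht) as [s [Hs Ha]].
    exists (upd s x a); split; [exists s, a; split; [|split; [exists t|]]; auto|].
    intros y Hy; rewrite Hu; apply (agree_below_upd n _ _ x a Ha); auto.
Qed.

Lemma qbf_eval_agree a n s t :
  qbf_var_bound a <= n -> agree_below n s t -> qbf_eval a s = qbf_eval a t.
Proof.
  revert s t; induction a; intros s t Hb Ha; simpl in *.
  - apply Ha; lia.
  - reflexivity.
  - reflexivity.
  - rewrite (IHa s t); auto.
  - rewrite (IHa1 s t), (IHa2 s t); auto; lia.
  - rewrite (IHa1 s t), (IHa2 s t); auto; lia.
  - rewrite (IHa (upd s n0 false) (upd t n0 false)), (IHa (upd s n0 true) (upd t n0 true));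
      auto using agree_below_upd.
  - rewrite (IHa (upd s n0 false) (upd t n0 false)), (IHa (upd s n0 true) (upd t n0 true));
      auto using agree_below_upd.
Qed.

Lemma tsat_equiv_below p n X Y :
  var_bound p <= n -> equiv_below n X Y -> tsat p X -> tsat p Y.
Proof.
  revert X Y; induction p as [a|p IH|p IHp q IHq|p IHp q IHq|x p IH|x p IH];
    intros X Y Hb HXY HX; simpl in *.
  - intros t Ht; destruct (proj2 HXY t Ht) as [s [Hs Ha]].
    rewrite <- (qbf_eval_agree a n s t); auto.
  - intro HY; apply HX, (IH Y X); auto using equiv_below_sym.
  - destruct HX as [HX|HX]; [left|right].
    + intro HY; apply HX, (IHp Y X); auto using equiv_below_sym; lia.
    + apply (IHq X Y); auto; lia.
  - intros Y1 Y2 HY HY1.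
    destruct (equiv_below_split n X Y Y1 Y2 HXY HY) as [X1 [X2 [HX12 [H1 H2]]]].
    apply (IHq X2 Y2); auto; [lia|].
    apply (HX X1 X2 HX12), (IHp Y1 X1); auto using equiv_below_sym; lia.
  - apply (IH (dup_team X x)); auto using equiv_below_dup.
  - intros G HG.
    destruct (equiv_below_supp n X Y G x HXY HG) as [F [HF HFG]].
    apply (IH (supp_team X F x)); auto.
Qed.

Fixpoint prefix (n : nat) (s : assignment) : list bool :=
  match n with
  | 0 => []
  | S n => s n :: prefix n s
  end.

Fixpoint bool_vectors (n : nat) : list (list bool) :=
  match n with
  | 0 => [[]]
  | S n => flat_map (fun v => [false :: v; true :: v]) (bool_vectors n)
  end.

Lemma prefix_in_bool_vectors n s : In (prefix n s) (bool_vectors n).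
Proof.
  induction n; simpl; auto.
  apply in_flat_map; exists (prefix n s); split; auto.
  destruct (s n); simpl; auto.
Qed.

Lemma agree_below_prefix n s t : prefix n s = prefix n t -> agree_below n s t.
Proof.
  induction n; intros H y Hy; [lia|].
  injection H as Hn H.
  destruct (Nat.eq_dec y n); [subst; auto|]. apply IHn; auto; lia.
Qed.

Fixpoint sublists {A} (l : list A) : list (list A) :=
  match l with
  | [] => [[]]
  | a :: l => sublists l ++ map (cons a) (sublists l)
  end.

Lemma sublists_select {A} (l : list A) (P : A -> Prop) :
  exists l', In l' (sublists l) /\ forall a, In a l' <-> In a l /\ P a.
Proof.
  induction l as [|b l [l' [Hl' Hsel]]]; simpl.
  - exists []; simpl; split; auto; tauto.
  - destruct (classic (P b)) as [Hb|Hb].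
    + exists (b :: l'); split; [apply in_or_app; right; apply in_map; auto|].
      intro a; simpl; rewrite Hsel; intuition congruence.
    + exists l'; split; [apply in_or_app; auto|].
      intro a; rewrite Hsel; simpl; intuition congruence.
Qed.

Lemma finitely_many_classes n :
  exists Ts : list team, forall X, exists T, In T Ts /\ equiv_below n X T.
Proof.
  exists (map (fun C s => In (prefix n s) C) (sublists (bool_vectors n))).
  intro X.
  destruct (sublists_select (bool_vectors n) (fun v => exists s, X s /\ prefix n s = v))
    as [C [HC Hsel]].
  exists (fun s => In (prefix n s) C); split; [apply in_map_iff; eauto|split].
  - intros s Hs; exists s; split; [apply Hsel; split; eauto using prefix_in_bool_vectors|].
    intros y _; auto.
  - intros t Ht; apply Hsel in Ht; destruct Ht as [_ [s [Hs Hst]]].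
    exists s; split; auto using agree_below_prefix.
Qed.

Lemma list_eventually {A} (B : nat -> A -> Prop) (l : list A) (k : nat) :
  (forall m m' a, m <= m' -> B m a -> B m' a) ->
  (forall a, In a l -> exists m, B m a) ->
  exists M, k <= M /\ forall a, In a l -> B M a.
Proof.
  intros Hmono; induction l as [|a l IH]; intros H.
  { exists k; split; [lia | simpl; tauto]. }
  destruct IH as [M [HM HMl]]; [intros; apply H; simpl; auto|].
  destruct (H a (or_introl eq_refl)) as [m Hm].
  exists (max m M); split; [lia|].
  intros b [<-|Hb]; [apply Hmono with m | apply Hmono with M]; auto; lia.
Qed.

Lemma list_witnesses {A B} (Q : B -> Prop) (R : A -> B -> Prop) (l : list A) :
  (forall a, In a l -> exists b, Q b /\ R a b) ->
  exists l', (forall b, In b l' -> Q b) /\ forall a, In a l -> exists b, In b l' /\ R a b.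
Proof.
  induction l as [|a l IH]; intros H.
  { exists []; simpl; tauto. }
  destruct IH as [l' [HQ HR]]; [intros; apply H; simpl; auto|].
  destruct (H a (or_introl eq_refl)) as [b [Hb Hab]].
  exists (b :: l'); split; [intros c [<-|Hc]; auto|].
  intros c [<-|Hc]; [exists b; simpl; auto|].
  destruct (HR c Hc) as [d [Hd Hcd]]; exists d; simpl; auto.
Qed.

Lemma dependent_choice {A} (P : nat -> A -> Prop) (R : nat -> A -> A -> Prop) (a0 : A) :
  P 0 a0 -> (forall n a, P n a -> exists b, P (S n) b /\ R n a b) ->
  exists f : nat -> A, f 0 = a0 /\ forall n, P n (f n) /\ R n (f n) (f (S n)).
Proof.
  intros H0 Hstep.
  assert (Hnext : forall n a, exists b, P n a -> P (S n) b /\ R n a b).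
  { intros n a; destruct (classic (P n a)) as [Ha|Ha].
    - destruct (Hstep n a Ha) as [b Hb]; exists b; auto.
    - exists a; tauto. }
  pose (next n a := proj1_sig (constructive_indefinite_description _ (Hnext n a))).
  assert (Hnext_spec : forall n a, P n a -> P (S n) (next n a) /\ R n a (next n a)).
  { intros n a; exact (proj2_sig (constructive_indefinite_description _ (Hnext n a))). }
  pose (f := nat_rect (fun _ => A) a0 next).
  assert (Hf : forall n, P n (f n)) by (induction n; simpl; auto; apply Hnext_spec; auto).
  exists f; split; auto.
  intro n; split; auto; apply (Hnext_spec n (f n) (Hf n)).
Qed.

Lemma agree_below_diagonal (c : nat -> assignment) k :
  (forall i, agree_below (i + k) (c (S i)) (c i)) ->
  forall i, agree_below (i + k) (fun y => c (S y) y) (c i).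
Proof.
  intros Hc.
  assert (Hchain : forall i d, agree_below (i + k) (c (d + i)) (c i)).
  { intros i d; induction d; simpl; [intros y _; auto|].
    apply agree_below_trans with (c (d + i)); auto.
    apply agree_below_mono with (d + i + k); [lia | apply Hc]. }
  intros i y Hy; simpl.
  destruct (le_lt_dec (S y) i).
  - pose proof (Hchain (S y) (i - S y) y ltac:(lia)) as Hq.
    replace (i - S y + S y) with i in Hq by lia; auto.
  - pose proof (Hchain i (S y - i) y Hy) as Hq.
    replace (S y - i + i) with (S y) in Hq by lia; auto.
Qed.

Section InverseLimit.

Variable sq : nat -> team.
Hypothesis sq_coherent : forall k, equiv_below k (sq (S k)) (sq k).

Lemma sq_chain k i : equiv_below k (sq (i + k)) (sq k).
Proof.
  induction i; simpl; [apply equiv_below_refl|].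
  apply equiv_below_trans with (sq (i + k)); auto.
  apply equiv_below_mono with (i + k); [lia | apply sq_coherent].
Qed.

Definition limit_team : team :=
  fun s => forall k, exists t, sq k t /\ agree_below k s t.

Lemma limit_team_equiv k : equiv_below k limit_team (sq k).
Proof.
  split; [intros s Hs; apply Hs|].
  intros t Ht.
  destruct (dependent_choice (fun i u => sq (i + k) u)
              (fun i u v => agree_below (i + k) v u) t Ht) as [c [Hc0 Hc]].
  { intros i u Hu. destruct (proj2 (sq_coherent (i + k)) u Hu) as [v Hv].
    exists v; exact Hv. }
  pose proof (agree_below_diagonal c k (fun i => proj2 (Hc i))) as Hdiag.
  exists (fun y => c (S y) y); split.
  - intro j. destruct (proj1 (sq_chain j k) (c j)) as [u [Hu Ha]].
    { rewrite Nat.add_comm; apply Hc. }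
    exists u; split; auto.
    apply agree_below_trans with (c j); auto.
    apply agree_below_mono with (j + k); [lia | apply Hdiag].
  - rewrite <- Hc0; apply (Hdiag 0).
Qed.

End InverseLimit.

Lemma pigeonhole_classes (Q : nat -> team -> Prop) k n :
  (forall m m' Y, m <= m' -> Q m' Y -> Q m Y) ->
  (forall m, k <= m -> exists Y, Q m Y) ->
  exists T, forall m, k <= m -> exists Y, Q m Y /\ equiv_below n Y T.
Proof.
  intros Hanti Hinh; apply NNPP; intro Hno.
  destruct (finitely_many_classes n) as [Ts HTs].
  destruct (list_eventually (fun m T => forall Y, Q m Y -> ~ equiv_below n Y T) Ts k)
    as [M [HkM HM]].
  - intros m m' T Hm H Y HY; apply H, Hanti with m'; auto.
  - intros T _; apply NNPP; intro HT; apply Hno; exists T; intros m Hm.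
    apply NNPP; intro Hm'; apply HT; exists m; intros Y HY HYT; apply Hm'; eauto.
  - destruct (Hinh M HkM) as [Y HY]; destruct (HTs Y) as [T [HT HYT]].
    exact (HM T HT Y HY HYT).
Qed.

Section TeamCompactness.

Variable P : nat -> team -> Prop.
Hypothesis P_equiv : forall k X Y, equiv_below k X Y -> P k X -> P k Y.
Hypothesis P_antitone : forall k m X, k <= m -> P m X -> P k X.
Hypothesis P_inhabited : forall k, exists X, P k X.

(** [X] is a node of the König tree that lies on arbitrarily long branches. *)
Definition extendable k X : Prop :=
  forall m, k <= m -> exists Y, P m Y /\ equiv_below k Y X.

Lemma extendable_P k X : extendable k X -> P k X.
Proof.
  intros HX; destruct (HX k (le_n k)) as [Y [HY HYX]]; eauto.
Qed.

Lemma extendable_base : exists X, extendable 0 X.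
Proof.
  destruct (pigeonhole_classes P 0 0) as [T HT]; eauto.
Qed.

Lemma extendable_step k X :
  extendable k X -> exists X', extendable (S k) X' /\ equiv_below k X X'.
Proof.
  intros HX.
  destruct (pigeonhole_classes (fun m Y => P m Y /\ equiv_below k Y X) k (S k))
    as [T HT]; [intros m m' Y Hm [HY HYX]; eauto | auto |].
  exists T; split.
  - intros m Hm; destruct (HT m ltac:(lia)) as [Y [[HY _] HYT]]; eauto.
  - destruct (HT k (le_n k)) as [Y [[_ HYX] HYT]].
    apply equiv_below_trans with Y; [apply equiv_below_sym; auto|].
    apply equiv_below_mono with (S k); auto.
Qed.

Theorem team_compactness : exists L, forall k, P k L.
Proof.
  destruct extendable_base as [X0 HX0].
  destruct (dependent_choice extendable (fun k X X' => equiv_below k X X') X0 HX0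
              extendable_step) as [sq [_ Hsq]].
  exists (limit_team sq); intro k.
  apply P_equiv with (sq k); [apply equiv_below_sym, limit_team_equiv|].
  - intro j; apply equiv_below_sym, Hsq.
  - apply extendable_P, Hsq.
Qed.

End TeamCompactness.

(** The [phi] clause is imposed only once [k] bounds the variables of [phi], which
    makes the property invariant under [equiv_below k]. *)
Definition counterexample (Gamma : qptl -> Prop) (phi : qptl) (k : nat) (X : team) :=
  (forall psi, Gamma psi -> var_bound psi <= k -> tsat psi X) /\
  (var_bound phi <= k -> ~ tsat phi X).

Lemma counterexample_equiv Gamma phi k X Y :
  equiv_below k X Y -> counterexample Gamma phi k X -> counterexample Gamma phi k Y.
Proof.
  intros HXY [HG Hphi]; split.
  - intros psi Hpsi Hb; apply (tsat_equiv_below psi k X); auto.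
  - intros Hb HY; apply (Hphi Hb), (tsat_equiv_below phi k Y); auto using equiv_below_sym.
Qed.

Lemma counterexample_antitone Gamma phi k m X :
  k <= m -> counterexample Gamma phi m X -> counterexample Gamma phi k X.
Proof.
  intros Hkm [HG Hphi]; split; [intros; apply HG; auto; lia|].
  intros Hb; apply Hphi; lia.
Qed.

Lemma finite_entailment_of_no_counterexample Gamma phi k :
  var_bound phi <= k -> (forall X, ~ counterexample Gamma phi k X) ->
  exists Delta : list qptl,
    (forall psi, In psi Delta -> Gamma psi) /\ entails (fun psi => In psi Delta) phi.
Proof.
  intros Hphi Hnone.
  destruct (finitely_many_classes k) as [Ts HTs].
  destruct (sublists_select Ts (fun T => ~ tsat phi T)) as [Ts' [_ HTs']].
  destruct (list_witnesses (fun psi => Gamma psi /\ var_bound psi <= k)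
              (fun T psi => ~ tsat psi T) Ts') as [Delta [HDelta HTs'Delta]].
  - intros T HT; apply HTs' in HT as [_ HT].
    apply NNPP; intro Hno; apply (Hnone T); split; [|auto].
    intros psi Hpsi Hb; apply NNPP; intro Hfail; apply Hno; exists psi; auto.
  - exists Delta; split; [intros psi Hpsi; apply HDelta; auto|].
    intros X HX; destruct (HTs X) as [T [HT HXT]].
    destruct (classic (tsat phi T)) as [HphiT|HphiT].
    + apply (tsat_equiv_below phi k T); auto using equiv_below_sym.
    + destruct (HTs'Delta T (proj2 (HTs' T) (conj HT HphiT))) as [psi [Hpsi HpsiT]].
      exfalso; apply HpsiT, (tsat_equiv_below psi k X); auto.
      apply HDelta; auto.
Qed.

Theorem mainTheorem13 :
  forall (Gamma : qptl -> Prop) (phi : qptl),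
    entails Gamma phi ->
    exists Delta : list qptl,
      (forall psi, In psi Delta -> Gamma psi) /\
      entails (fun psi => In psi Delta) phi.
Proof.
  intros Gamma phi Hent; apply NNPP; intro Hno.
  assert (Hlevels : forall k, exists X, counterexample Gamma phi k X).
  { intro k.
    destruct (classic (exists X, counterexample Gamma phi (max k (var_bound phi)) X))
      as [[X HX]|Hnone].
    - exists X; apply counterexample_antitone with (max k (var_bound phi)); auto; lia.
    - exfalso; apply Hno, (finite_entailment_of_no_counterexample _ _ (max k (var_bound phi)));
        [lia|]; intros X HX; apply Hnone; eauto. }
  destruct (team_compactness (counterexample Gamma phi) (counterexample_equiv Gamma phi)
              (counterexample_antitone Gamma phi) Hlevels) as [L HL].
  apply (proj2 (HL (var_bound phi)) (le_n _)), Hent.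
  intros psi Hpsi; apply (proj1 (HL (var_bound psi))); auto.
Qed.
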